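(* Let $(Y,\mathfrak C,\gamma)$ be a standard non-atomic probability space, let $\mathbf B=(B_n)_{n=1}^\infty$ be a sequence of sets in $\mathfrak C$ with $\gamma(B_n)>0$, and let $\gamma^{\mathbf B}$ be the restricted infinite power of $\gamma$ with respect to $\mathbf B$ on $(X,\mathfrak B)=(Y,\mathfrak C)^{\otimes\mathbb N}$. Let $T$ be a $\gamma$-preserving Borel bijection of $Y$ and $\mathbf T=\bigotimes_{n=1}^\infty T$ the coordinatewise map on $X$. If $\sum_{n=1}^\infty \frac{\gamma(B_n\triangle TB_n)}{\gamma(B_n)}<\infty$, then $\mathbf T$ preserves $\gamma^{\mathbf B}$.
   Context: For $n\in\mathbb N$ put $\mathbf B^n=Y^n\times B_{n+1}\times B_{n+2}\times\cdots$, so $\mathbf B^1\subset\mathbf B^2\subset\cdots$. The restricted infinite power $\gamma^{\mathbf B}$ is the unique $\sigma$-finite measure on $(X,\mathfrak B)$, supported on $\bigcup_n\mathbf B^n$, whose restriction to each $\mathbf B^n$ equals $\frac{\gamma}{\gamma(B_1)}\otimes\cdots\otimes\frac{\gamma}{\gamma(B_n)}\otimes\frac{\gamma\restriction B_{n+1}}{\gamma(B_{n+1})}\otimes\frac{\gamma\restriction B_{n+2}}{\gamma(B_{n+2})}\otimes\cdots$ (these restrictions are compatible). *)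

From HB Require Import structures.
From mathcomp Require Import all_boot all_order all_algebra.
From mathcomp Require Import all_classical all_reals all_analysis.
Set Implicit Arguments. Unset Strict Implicit. Unset Printing Implicit Defensive.
Import Order.TTheory GRing.Theory Num.Theory.
Local Open Scope classical_set_scope.
Local Open Scope ring_scope.

Definition cyl_gen d (Y : measurableType d) : set (set (nat -> Y)) :=
  [set A | exists (k : nat) (C : set Y), measurable C /\ A = (fun x => x k) @^-1` C].

Definition prodN d (Y : measurableType d) := g_sigma_algebraType (@cyl_gen d Y).

Definition standard_borel d (Y : measurableType d) (R : realType) : Prop :=
  exists f : Y -> measurableTypeR R,
    injective f /\ measurable_fun setT f /\ measurable (range f) /\
    (forall A : set Y, measurable A -> measurable (f @` A)).

Definition nonatomic d (Y : measurableType d) (R : realType)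
    (g : {measure set Y -> \bar R}) : Prop :=
  forall A : set Y, measurable A -> (0 < g A)%E ->
    exists C : set Y, [/\ measurable C, C `<=` A, (0 < g C)%E & (g C < g A)%E].

(* B^n = Y^n x B_{n+1} x B_{n+2} x ... (0-indexed: coordinates k >= n lie in B k) *)
Definition Bpow d (Y : measurableType d) (B : nat -> set Y) (n : nat) : set (@prodN d Y) :=
  [set x | forall k, (n <= k)%N -> B k (x k)].

Definition rect d (Y : measurableType d) (A : nat -> set Y) (m : nat) : set (@prodN d Y) :=
  [set x | forall k, (k < m)%N -> A k (x k)].

(* mu is the restricted infinite power gamma^B: sigma-finite, supported on
   \bigcup_n B^n, and its restriction to each B^n is the product measure
   (gamma/gamma(B_1)) x ... x (gamma/gamma(B_n)) x (gamma|B_{n+1}/gamma(B_{n+1})) x ...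
   (determined by its values on the rectangles with m >= n). *)
Definition restricted_infinite_power d (Y : measurableType d) (R : realType)
    (g : probability Y R) (B : nat -> set Y)
    (mu : {measure set (@prodN d Y) -> \bar R}) : Prop :=
  [/\ sigma_finite setT mu,
      mu (~` \bigcup_n Bpow B n) = 0%E &
      forall (n m : nat) (A : nat -> set Y), (n <= m)%N ->
        (forall k, measurable (A k)) ->
        mu (Bpow B n `&` rect A m) =
        (\prod_(k < m)
           (if (k < n)%N then fine (g (A k)) / fine (g (B k))
            else fine (g (A k `&` B k)) / fine (g (B k))))%:E].

Definition prodmap d (Y : measurableType d) (T : Y -> Y) : @prodN d Y -> @prodN d Y :=
  fun x => (fun k => T (x k)) : @prodN d Y.

From HB Require Import structures.
From mathcomp Require Import all_boot all_order all_algebra.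
From mathcomp Require Import all_classical all_reals all_analysis.
Set Implicit Arguments. Unset Strict Implicit. Unset Printing Implicit Defensive.
Import Order.TTheory GRing.Theory Num.Theory.
Local Open Scope classical_set_scope.
Local Open Scope ring_scope.

(* Write P for the coordinatewise map and W_N for the set of sequences x with
   x_k in B_k /\ T B_k for all k >= N; then P^-1 W_N is the analogous set for
   B_k /\ T^-1 B_k.  On these sets mu is a finite product-type measure, and as
   T preserves g and maps each factor of P^-1 W_N onto the corresponding factor
   of W_N, the image of mu restricted to P^-1 W_N agrees with mu restricted to
   W_N on rectangles, hence everywhere.  Both g (B_k \ T B_k) and
   g (B_k \ T^-1 B_k) = g (T B_k \ B_k) are bounded by g (B_k Δ T B_k), so a
   Borel-Cantelli estimate turns the summability hypothesis into: mu-almost every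
   point lies in some W_N and in some P^-1 W_N.  Letting N go to infinity gives
   mu (P^-1 S) = mu S. *)

Lemma preimage_image_inj (U V : Type) (f : U -> V) (A : set U) :
  injective f -> f @^-1` (f @` A) = A.
Proof.
move=> finj; apply/seteqP; split => [x [y Ay /finj <-] //|]; exact: preimage_image.
Qed.

Section cvg_measure_conull.
Context d (X : measurableType d) (R : realType).
Variables (mu : {measure set X -> \bar R}) (V : nat -> set X).
Hypotheses (mV : forall N, measurable (V N)) (ndV : nondecreasing_seq V).
Hypothesis V_conull : mu (~` \bigcup_N V N) = 0%E.

Lemma cvg_measure_setI_conull E : measurable E ->
  mu (E `&` V N) @[N --> \oo] --> mu E.
Proof.
move=> mE; have mU : measurable (\bigcup_N V N) by exact: bigcupT_measurable.
have -> : mu E = mu (\bigcup_N (E `&` V N)).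
  rewrite -setI_bigcupr -[in LHS](setUIDK E (\bigcup_N V N)) measureU0 //.
  - exact: measurableI.
  - exact: measurableD.
  by apply: subset_measure0 V_conull => //; [exact: measurableD | exact: measurableC].
apply: nondecreasing_cvg_mu => [N||]; first exact: measurableI.
  by apply: bigcupT_measurable => N; exact: measurableI.
move=> N M NM; apply/subsetPset; apply: setIS; apply/subsetPset; exact: ndV.
Qed.

End cvg_measure_conull.

Section product_space.
Context d (Y : measurableType d).
Implicit Types (A C : nat -> set Y) (m n : nat).

Definition box A : set (prodN Y) := [set x | forall k, A k (x k)].

Lemma measurable_coord k (C : set Y) : measurable C ->
  measurable ((fun x : prodN Y => x k) @^-1` C).
Proof. by move=> mC; apply: sub_sigma_algebra; exists k, C. Qed.

Lemma rect0 A : rect A 0 = setT.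
Proof. by apply/seteqP; split. Qed.

Lemma rectS A m : rect A m.+1 = rect A m `&` (fun x : prodN Y => x m) @^-1` A m.
Proof.
apply/seteqP; split => x /=; first by move=> xA; split => [k /ltnW|]; apply: xA.
by move=> [xA xAm] k; rewrite ltnS leq_eqVlt => /predU1P[->|/xA].
Qed.

Lemma measurable_rect A m : (forall k, measurable (A k)) -> measurable (rect A m).
Proof.
move=> mA; elim: m => [|m IH]; first by rewrite rect0.
by rewrite rectS; apply: measurableI => //; exact: measurable_coord.
Qed.

Lemma Bpow_bigcap C n :
  Bpow C n = \bigcap_k (fun x : prodN Y => x k) @^-1` (if (n <= k)%N then C k else setT).
Proof.
apply/seteqP; split => x /= xC k; first by case: ifPn => // /xC.
by move=> nk; have := xC k I; rewrite nk.
Qed.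

Lemma measurable_Bpow C n : (forall k, measurable (C k)) -> measurable (Bpow C n).
Proof.
move=> mC; rewrite Bpow_bigcap; apply: bigcapT_measurable => k.
by apply: measurable_coord; case: ifP.
Qed.

Lemma nondecreasing_Bpow C : nondecreasing_seq (Bpow C).
Proof. by move=> n m nm; apply/subsetPset => x xC k mk; apply: xC (leq_trans nm mk). Qed.

Lemma rectI_Bpow A C m n : rect A m `&` Bpow C n =
  box (fun k => (if (k < m)%N then A k else setT) `&` (if (n <= k)%N then C k else setT)).
Proof.
apply/seteqP; split => [x [xA xC] k|x xAC].
  by split; [case: ltnP => // /xA | case: leqP => // /xC].
by split => k km; have := xAC k; rewrite km => -[].
Qed.

Lemma box_sub_Bpow A C n : (forall k, (n <= k)%N -> A k `<=` C k) -> box A `<=` Bpow C n.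
Proof. by move=> sAC x xA k nk; exact: sAC k nk _ (xA k). Qed.

Lemma measurable_prodmap (T : Y -> Y) : measurable_fun setT T ->
  measurable_fun setT (prodmap T).
Proof.
move=> mT; apply: (@measurability _ _ _ (prodN Y) setT _ (@cyl_gen d Y)) => //.
move=> _ [_ [k [C [mC ->]]] <-]; rewrite setTI.
apply: (@measurable_coord k (T @^-1` C)).
by rewrite -(setTI (T @^-1` C)); exact: mT.
Qed.

Definition rects : set (set (prodN Y)) :=
  [set S | exists A m, (forall k, measurable (A k)) /\ S = rect A m].

Lemma coord_rect k (C : set Y) :
  (fun x : prodN Y => x k) @^-1` C = rect (fun j => if j == k then C else setT) k.+1.
Proof.
rewrite rectS /=; apply/seteqP; split => [x Cx|x [_]]; last by rewrite eqxx.
by split; [move=> j jk; rewrite (ltn_eqF jk) | rewrite /= eqxx].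
Qed.

Lemma rects_generate : measurable = <<s rects >>.
Proof.
apply/seteqP; split.
  apply: smallest_sub; first exact: smallest_sigma_algebra.
  move=> _ [k [C [mC ->]]]; apply: sub_sigma_algebra; rewrite coord_rect.
  by exists (fun j => if j == k then C else setT), k.+1; split => // j; case: eqP.
apply: smallest_sub; first exact: sigma_algebra_measurable.
by move=> _ [A [m [mA ->]]]; exact: measurable_rect.
Qed.

Lemma rects_setI_closed : setI_closed rects.
Proof.
move=> _ _ [A [m [mA ->]]] [A' [m' [mA' ->]]].
pose ext A m k := if (k < m)%N then A k else setT.
exists (fun k => ext A m k `&` ext A' m' k), (maxn m m'); split.
  by move=> k; apply: measurableI; rewrite /ext; case: ifP.
apply/seteqP; split => [x [xA xA'] k _|x xAA'].
  by rewrite /ext; split; [case: ltnP => // /xA | case: ltnP => // /xA'].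
split => k km.
  by have [+ _] := xAA' k (leq_trans km (leq_maxl _ _)); rewrite /ext km.
by have [_ +] := xAA' k (leq_trans km (leq_maxr _ _)); rewrite /ext km.
Qed.

Lemma measure_unique_rect (R : realType) (m1 m2 : {measure set (prodN Y) -> \bar R}) :
  (m1 setT < +oo)%E ->
  (forall A m, (forall k, measurable (A k)) -> m1 (rect A m) = m2 (rect A m)) ->
  forall S, measurable S -> m1 S = m2 S.
Proof.
move=> m1_fin m1m2 S mS.
apply: (measure_unique rects (fun _ => setT)) => //.
- exact: rects_generate.
- exact: rects_setI_closed.
- by move=> _; exists (fun _ => setT), 0%N; rewrite rect0.
- by rewrite bigcup_const.
- by move=> _ [A [m [mA ->]]]; exact: m1m2.
Qed.

End product_space.

Section restricted_infinite_power.
Context d (Y : measurableType d) (R : realType).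
Variables (g : probability Y R) (B : nat -> set Y).
Hypotheses (mB : forall n, measurable (B n)) (gB_gt0 : forall n, (0 < g (B n))%E).
Variable mu : {measure set (prodN Y) -> \bar R}.
Hypothesis mu_supp : mu (~` \bigcup_n Bpow B n) = 0%E.
Hypothesis mu_rect : forall (n m : nat) (A : nat -> set Y), (n <= m)%N ->
  (forall k, measurable (A k)) ->
  mu (Bpow B n `&` rect A m) =
  (\prod_(k < m)
     (if (k < n)%N then fine (g (A k)) / fine (g (B k))
      else fine (g (A k `&` B k)) / fine (g (B k))))%:E.

Lemma fine_gB_neq0 k : fine (g (B k)) != 0.
Proof.
have : g (B k) \is a fin_num by rewrite fin_num_measure.
by move: (gB_gt0 k); case: (g (B k)) => // r; rewrite lte_fin => /gt_eqF ->.
Qed.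

Lemma mu_Bpow_lty n : (mu (Bpow B n) < +oo)%E.
Proof.
have -> : Bpow B n = Bpow B n `&` rect (fun _ => setT) n by rewrite setIidl.
by rewrite mu_rect //; exact: ltry.
Qed.

Lemma cvg_mu_Bpow_rect D n : (forall k, measurable (D k)) ->
  mu (Bpow B n `&` rect D (M + n)) @[M --> \oo] --> mu (Bpow B n `&` box D).
Proof.
move=> mD; have -> : Bpow B n `&` box D = \bigcap_M (Bpow B n `&` rect D (M + n)).
  apply/seteqP; split => [x [xB xD] M _|x xBD]; first by split => // k _; exact: xD.
  split; first by case: (xBD 0%N I).
  by move=> k; case: (xBD k.+1 I) => _; apply; rewrite addSn ltnS leq_addr.
have mBD M : measurable (Bpow B n `&` rect D (M + n)).
  by apply: measurableI; [exact: measurable_Bpow | exact: measurable_rect].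
apply: nonincreasing_cvg_mu => //.
- by rewrite mu_rect ?leq_addl //; exact: ltry.
- exact: bigcapT_measurable.
- move=> M M' MM'; apply/subsetPset; apply: setIS => x xD k kM; apply: xD.
  by rewrite (leq_trans kM) // leq_add2r.
Qed.

Lemma mu_Bpow_box_eq D D' n :
  (forall k, measurable (D k)) -> (forall k, measurable (D' k)) ->
  (forall k, (k < n)%N -> g (D k) = g (D' k)) ->
  (forall k, (n <= k)%N -> g (D k `&` B k) = g (D' k `&` B k)) ->
  mu (Bpow B n `&` box D) = mu (Bpow B n `&` box D').
Proof.
move=> mD mD' gDD'_lt gDD'_ge.
have rectDD' M : mu (Bpow B n `&` rect D (M + n)) = mu (Bpow B n `&` rect D' (M + n)).
  rewrite !mu_rect ?leq_addl //; congr (_%:E); apply: eq_bigr => k _.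
  by case: ltnP => [/gDD'_lt|/gDD'_ge] ->.
rewrite -(cvg_lim _ (cvg_mu_Bpow_rect mD)) // -(cvg_lim _ (cvg_mu_Bpow_rect mD')) //.
by under eq_fun do rewrite rectDD'.
Qed.

Lemma mu_Bpow_coord K k (C : set Y) : (K <= k)%N -> measurable C ->
  mu (Bpow B K `&` (fun x : prodN Y => x k) @^-1` C) =
  ((\prod_(j < K) (fine (g (B j)))^-1) * (fine (g (C `&` B k)) / fine (g (B k))))%:E.
Proof.
move=> Kk mC; rewrite coord_rect mu_rect; last 2 first.
- exact: leq_trans Kk (leqnSn k).
- by move=> j; case: eqP.
congr (_%:E); rewrite big_ord_recr /= eqxx ltnNge Kk /=; congr (_ * _).
rewrite [RHS](big_ord_widen _ (fun j => (fine (g (B j)))^-1) Kk).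
rewrite [LHS](bigID (fun i : 'I_k => (i < K)%N)) /=.
rewrite [X in _ * X]big1 ?mulr1 => [|i]; last first.
  rewrite -leqNgt => Ki.
  by rewrite ltnNge Ki (ltn_eqF (ltn_ord i)) setTI divff ?fine_gB_neq0.
apply: eq_bigr => i iK.
by rewrite iK (ltn_eqF (ltn_ord i)) probability_setT div1r.
Qed.

Lemma mu_Bpow_not_eventually C K : (forall k, measurable (C k)) ->
  (\sum_(0 <= k <oo) (fine (g (B k `\` C k)) / fine (g (B k)))%:E < +oo)%E ->
  mu (Bpow B K `\` \bigcup_N Bpow (fun k => B k `&` C k) N) = 0%E.
Proof.
move=> mC sum_fin.
set c := \prod_(j < K) (fine (g (B j)))^-1.
have c_ge0 : 0 <= c by apply: prodr_ge0 => j _; rewrite invr_ge0 fine_ge0.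
pose b k := fine (g (B k `\` C k)) / fine (g (B k)).
have b_ge0 k : 0 <= b k by rewrite divr_ge0 ?fine_ge0.
pose F k := Bpow B K `&` (fun x : prodN Y => x k) @^-1` ~` C k.
have mF k : measurable (F k).
  apply: measurableI; first exact: measurable_Bpow.
  by apply: measurable_coord; exact: measurableC.
set Z := _ `\` _.
have mZ : measurable Z.
  apply: measurableD; first exact: measurable_Bpow.
  by apply: bigcupT_measurable => N; apply: measurable_Bpow => k; exact: measurableI.
have Z_tail M : (K <= M)%N -> Z `<=` \bigcup_(k in ~` `I_M) F k.
  move=> KM x [xB xU].
  have /existsNP[k /not_implyP[Mk xnBC]] : ~ Bpow (fun k => B k `&` C k) M x.
    by move=> xBC; apply: xU; exists M.
  exists k; first by rewrite /= ltnNge Mk.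
  split => // xC; apply: xnBC; split => //; exact/xB/(leq_trans KM Mk).
have mu_Z_le M : (K <= M)%N -> (mu Z <= c%:E * \sum_(M <= k <oo) (b k)%:E)%E.
  move=> KM; rewrite -nneseriesZl => [|k _]; last by rewrite lee_fin.
  apply: le_trans (measure_sigma_subadditive_tail _ mF mZ (Z_tail M KM)) _.
  rewrite [X in (X <= _)%E]eseries_cond [X in (_ <= X)%E]eseries_cond.
  apply: lee_nneseries => [k _ _|k /= Mk]; first exact: measure_ge0.
  rewrite mu_Bpow_coord; [|exact: leq_trans KM Mk|exact: measurableC].
  by rewrite setIC -setDE EFinM.
suff : (mu Z <= 0)%E by rewrite measure_le0 => /eqP.
rewrite -(mule0 c%:E).
have tail_cvg : (\sum_(M <= k <oo) (b k)%:E @[M --> \oo] --> 0)%E.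
  by apply: nneseries_tail_cvg sum_fin _ => i _; rewrite lee_fin; exact: b_ge0.
apply: cvge_to_ge (cvgeZl (y := c%:E) isT tail_cvg) _.
by exists K => // M /= KM; exact: mu_Z_le.
Qed.

Lemma mu_not_eventually C : (forall k, measurable (C k)) ->
  (\sum_(0 <= k <oo) (fine (g (B k `\` C k)) / fine (g (B k)))%:E < +oo)%E ->
  mu (~` \bigcup_N Bpow (fun k => B k `&` C k) N) = 0%E.
Proof.
move=> mC sum_fin; set U := \bigcup_N _.
have mU : measurable U.
  by apply: bigcupT_measurable => N; apply: measurable_Bpow => k; exact: measurableI.
have mBpowU : measurable (\bigcup_n Bpow B n).
  by apply: bigcupT_measurable => n; exact: measurable_Bpow.
apply/negligibleP; first exact: measurableC.
apply: (@negligibleS _ _ _ mu ((~` \bigcup_n Bpow B n) `|` \bigcup_K (Bpow B K `\` U))).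
  move=> x xU; have [[K _ xB]|] := pselect ((\bigcup_n Bpow B n) x); last by left.
  by right; exists K.
apply: negligibleU; first by apply/negligibleP => //; exact: measurableC.
apply: negligible_bigcup => K; apply/negligibleP; last exact: mu_Bpow_not_eventually.
by apply: measurableD => //; exact: measurable_Bpow.
Qed.

Lemma ratio_series_le_lt (C D : nat -> set Y) :
  (forall k, measurable (C k)) -> (forall k, measurable (D k)) ->
  (forall k, g (C k) <= g (D k))%E ->
  (\sum_(0 <= k <oo) (fine (g (D k)) / fine (g (B k)))%:E < +oo)%E ->
  (\sum_(0 <= k <oo) (fine (g (C k)) / fine (g (B k)))%:E < +oo)%E.
Proof.
move=> mC mD gCD; apply: le_lt_trans; apply: lee_nneseries => k _.
  by rewrite lee_fin divr_ge0 ?fine_ge0.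
by rewrite lee_fin ler_wpM2r ?invr_ge0 ?fine_ge0 // fine_le ?fin_num_measure.
Qed.

Variable T : Y -> Y.
Hypotheses (injT : injective T) (mT : measurable_fun setT T).
Hypothesis mT_image : forall A, measurable A -> measurable (T @` A).
Hypothesis T_preserving : forall A, measurable A -> g (T @^-1` A) = g A.

Let mT_preimage A : measurable A -> measurable (T @^-1` A).
Proof. by move=> mA; rewrite -(setTI (T @^-1` A)); exact: mT. Qed.

Lemma prodmap_preimage_Bpow N :
  prodmap T @^-1` Bpow (fun k => B k `&` T @` B k) N =
  Bpow (fun k => B k `&` T @^-1` B k) N.
Proof.
suff -> : (fun k => B k `&` T @^-1` B k) = fun k => T @^-1` (B k `&` T @` B k) by [].
by apply/funext => k; rewrite preimage_setI preimage_image_inj // setIC.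
Qed.

Lemma mu_prodmap_Bpow N S : measurable S ->
  mu (prodmap T @^-1` S `&` Bpow (fun k => B k `&` T @^-1` B k) N) =
  mu (S `&` Bpow (fun k => B k `&` T @` B k) N).
Proof.
set W := Bpow (fun k => B k `&` T @` B k) N.
have mW : measurable W.
  by apply: measurable_Bpow => k; apply: measurableI; last exact: mT_image.
rewrite -prodmap_preimage_Bpow -/W.
have mPW : measurable (prodmap T @^-1` W).
  by rewrite -(setTI (_ @^-1` _)); exact: measurable_prodmap.
have T_preimage_sub k (A : set Y) : A `<=` T @` B k -> T @^-1` A `<=` B k.
  by move=> AT x /AT[y By /injT <-].
change (measurable S -> pushforward (mrestr mu mPW) (prodmap T) S = mrestr mu mW S).
move: S; apply: measure_unique_rect => [|mP|mP]; first exact: measurable_prodmap.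
  change (mu (prodmap T @^-1` setT `&` prodmap T @^-1` W) < +oo)%E.
  rewrite preimage_setT setTI; apply: le_lt_trans (mu_Bpow_lty N).
  apply: le_measure; rewrite ?inE //; first exact: measurable_Bpow.
  by move=> x xW k /xW[_ [y By /injT <-]].
move=> A m mA.
change (mu (prodmap T @^-1` (rect A m `&` W)) = mu (rect A m `&` W)).
rewrite /W rectI_Bpow.
set E := fun k => _ `&` _.
have mE k : measurable (E k).
  by apply: measurableI; case: ifP => // _; apply: measurableI; last exact: mT_image.
have E_sub k : (N <= k)%N -> E k `<=` B k `&` T @` B k by rewrite /E => ->; move=> y [].
have E_subB k : (N <= k)%N -> E k `<=` B k by move=> /E_sub EB y /EB[].
have TE_subB k : (N <= k)%N -> T @^-1` E k `<=` B k.
  by move=> /E_sub EB; apply: T_preimage_sub => y /EB[].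
rewrite -[X in mu X = _](setIidr (box_sub_Bpow TE_subB)).
rewrite -[X in _ = mu X](setIidr (box_sub_Bpow E_subB)).
apply: mu_Bpow_box_eq => k; [exact: mT_preimage | exact: mE | |].
  by move=> _; exact: T_preserving.
by move=> Nk; rewrite (setIidl (TE_subB k Nk)) (setIidl (E_subB k Nk)) T_preserving.
Qed.

Hypothesis symdiff_summable : (\sum_(0 <= n <oo)
  (fine (g ((B n `\` T @` B n) `|` (T @` B n `\` B n))) / fine (g (B n)))%:E < +oo)%E.

Let g_le_symdiff k (A : set Y) : measurable A ->
  A `<=` (B k `\` T @` B k) `|` (T @` B k `\` B k) ->
  (g A <= g ((B k `\` T @` B k) `|` (T @` B k `\` B k)))%E.
Proof.
move=> mA sA; apply: le_measure; rewrite ?inE //.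
by apply: measurableU; apply: measurableD => //; exact: mT_image.
Qed.

Lemma mu_not_eventually_image :
  mu (~` \bigcup_N Bpow (fun k => B k `&` T @` B k) N) = 0%E.
Proof.
apply: mu_not_eventually => [k|]; first exact: mT_image.
apply: ratio_series_le_lt symdiff_summable => [k||k].
- by apply: measurableD => //; exact: mT_image.
- by move=> k; apply: measurableU; apply: measurableD => //; exact: mT_image.
- by apply: g_le_symdiff; [apply: measurableD => //; exact: mT_image | exact: subsetUl].
Qed.

Lemma mu_not_eventually_preimage :
  mu (~` \bigcup_N Bpow (fun k => B k `&` T @^-1` B k) N) = 0%E.
Proof.
apply: mu_not_eventually => [k|]; first exact: mT_preimage.
apply: ratio_series_le_lt symdiff_summable => [k||k].
- by apply: measurableD => //; exact: mT_preimage.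
- by move=> k; apply: measurableU; apply: measurableD => //; exact: mT_image.
have mTBB : measurable (T @` B k `\` B k) by apply: measurableD => //; exact: mT_image.
have -> : B k `\` T @^-1` B k = T @^-1` (T @` B k `\` B k).
  by rewrite !setDE preimage_setI -preimage_setC preimage_image_inj.
by rewrite T_preserving //; apply: g_le_symdiff => //; exact: subsetUr.
Qed.

End restricted_infinite_power.

Theorem proposition1p6 (d : measure_display) (Y : measurableType d) (R : realType)
  (g : probability Y R)
  (Hstd : standard_borel Y R) (Hna : nonatomic g)
  (B : nat -> set Y) (HBm : forall n, measurable (B n)) (HBpos : forall n, (0 < g (B n))%E)
  (mu : {measure set (@prodN d Y) -> \bar R})
  (Hmu : restricted_infinite_power g B mu)
  (T : Y -> Y) (HTbij : bijective T) (HTm : measurable_fun setT T)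
  (HTinvm : forall A : set Y, measurable A -> measurable (T @` A))
  (HTpres : forall A : set Y, measurable A -> g (T @^-1` A) = g A)
  (Hsum : (\sum_(0 <= n <oo)
             (fine (g ((B n `\` T @` B n) `|` (T @` B n `\` B n))) / fine (g (B n)))%:E
           < +oo)%E) :
  forall A : set (@prodN d Y), measurable A -> mu (prodmap T @^-1` A) = mu A.
Proof.
case: Hmu => _ mu_supp mu_rect S mS.
have injT := bij_inj HTbij.
have mTB k : measurable (T @` B k) := HTinvm _ (HBm k).
have mTpreB k : measurable (T @^-1` B k) by rewrite -(setTI (T @^-1` _)); exact: HTm.
have mPS : measurable (prodmap T @^-1` S).
  by rewrite -(setTI (_ @^-1` _)); exact: measurable_prodmap.
have cvgS := cvg_measure_setI_conull
  (fun N => measurable_Bpow N (fun k => measurableI _ _ (HBm k) (mTB k)))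
  (@nondecreasing_Bpow _ _ _)
  (mu_not_eventually_image HBm HBpos mu_supp mu_rect HTinvm Hsum) mS.
have cvgPS := cvg_measure_setI_conull
  (fun N => measurable_Bpow N (fun k => measurableI _ _ (HBm k) (mTpreB k)))
  (@nondecreasing_Bpow _ _ _)
  (mu_not_eventually_preimage HBm HBpos mu_supp mu_rect injT HTm HTinvm HTpres Hsum) mPS.
rewrite -(cvg_lim _ cvgPS) // -(cvg_lim _ cvgS) //.
by under eq_fun do rewrite (mu_prodmap_Bpow HBm mu_rect injT HTm HTinvm HTpres _ mS).
Qed.
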